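(* Let $H$ be a connected block graph with at least one edge, and define a vertex set $R\subseteq V(H)$ as follows. (1) If $H$ is a clique or a star, $R=V(H)$. (2) Otherwise, if $H$ has a leaf block $Q$ with $|V(Q)|\ge 3$, $R=V(Q)$. (3) Otherwise, $H$ is pointed; let $Q$ be a near-leaf block of $H$, and let $v$ be the anchor of $Q$ if it exists and otherwise any cut-vertex of $Q$. (3a) If $Q$ contains exactly two cut-vertices, let $u$ be the other one and $R=V(Q_u)$. (3b) Otherwise let $u,w$ be distinct cut-vertices in $V(Q)\setminus\{v\}$, and let $S^u,S^w$ be the sets of degree-one vertices adjacent to $u$, respectively $w$; set $R=V(Q_{u,w})\setminus\{v\}$ if $Q$ contains exactly three cut-vertices, and $R=S^u\cup S^w\cup\{u,w\}$ otherwise. Then $\operatorname{cobox}(H\setminus R)\le \operatorname{cobox}(H)-1$, where $H\setminus R$ is the subgraph induced on $V(H)\setminus R$.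
   Context: All graphs are finite and simple; big ants and neighbourhoods are taken in $H$. A block is a maximal connected subgraph with no cut-vertex of its own; a block graph is one whose blocks are all complete. A cut-vertex is a vertex whose removal increases the number of connected components. A block is a leaf block if it contains exactly one cut-vertex, an internal block if it contains at least two, and an edge block if it has exactly two vertices; two distinct blocks are neighbours if they share a vertex. A graph is pointed if all its leaf blocks are edge blocks. An internal block $Q$ is a near-leaf block if either all neighbours of $Q$ are leaf blocks, or all internal block neighbours of $Q$ share with $Q$ one and the same cut-vertex, called the anchor of $Q$. For a clique $Q$ and $u,v\in V(Q)$, the big ant is $Q_{u,v}=\big(V(Q)\cup N_H(u)\cup N_H(v),\ E(Q)\cup\delta_H(u)\cup\delta_H(v)\big)$, $Q_u=Q_{u,u}$, where $N_H(x)$ and $\delta_H(x)$ are the neighbourhood and incident edge set of $x$. The co-boxicity $\operatorname{cobox}(G)$ is the boxicity of the complement of $G$; equivalently, the minimum number of co-interval subgraphs of $G$ whose edge sets cover $E(G)$ (so it is $0$ for edgeless graphs), where a graph is co-interval if its vertices can be assigned closed real intervals such that two vertices are adjacent iff their intervals are disjoint. *)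

From Stdlib Require Import Rdefinitions ClassicalEpsilon.
From mathcomp Require Import all_boot.

Set Implicit Arguments.
Unset Strict Implicit.
Unset Printing Implicit Defensive.

Section GraphDefs.
Variable T : finType.
(* H is the simple graph with vertex set T and adjacency relation e
   (symmetric and irreflexive, assumed in the theorem). *)
Variable e : rel T.

Definition Nb (x : T) : {set T} := [set y | e x y].

Definition ind_rel (S : {set T}) : rel T := [rel a b | [&& e a b, a \in S & b \in S]].

Definition comp_of (S : {set T}) (x : T) : {set T} :=
  [set y in S | connect (ind_rel S) x y].

Definition ncomp (S : {set T}) : nat := #|[set comp_of S x | x in S]|.

Definition connected_set (S : {set T}) : Prop :=
  forall x y, x \in S -> y \in S -> connect (ind_rel S) x y.

Definition is_cut_vertex (x : T) : bool := ncomp [set: T] < ncomp [set~ x].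

Definition no_own_cut (S : {set T}) : Prop :=
  forall x, x \in S -> ncomp (S :\ x) <= ncomp S.

Definition biconn_set (S : {set T}) : Prop :=
  [/\ S != set0, connected_set S & no_own_cut S].

(* blocks, represented by their vertex sets (blocks are induced subgraphs) *)
Definition is_block (B : {set T}) : Prop :=
  biconn_set B /\ forall B' : {set T}, B \proper B' -> ~ biconn_set B'.

Definition is_clique_set (S : {set T}) : Prop :=
  forall u v, u \in S -> v \in S -> u != v -> e u v.

Definition block_graph : Prop := forall B, is_block B -> is_clique_set B.

Definition cut_in (B : {set T}) : {set T} := [set x in B | is_cut_vertex x].

Definition leaf_block (B : {set T}) : Prop := is_block B /\ #|cut_in B| = 1.
Definition internal_block (B : {set T}) : Prop := is_block B /\ 2 <= #|cut_in B|.
Definition edge_block (B : {set T}) : Prop := is_block B /\ #|B| = 2.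

Definition block_nbrs (B B' : {set T}) : Prop :=
  [/\ is_block B, is_block B', B != B' & ~~ [disjoint B & B']].

Definition pointed : Prop := forall B, leaf_block B -> edge_block B.

Definition is_anchor (Q : {set T}) (v : T) : Prop :=
  [/\ v \in cut_in Q,
      (exists Q', block_nbrs Q Q' /\ internal_block Q') &
      forall Q', block_nbrs Q Q' -> internal_block Q' -> Q :&: Q' = [set v]].

Definition near_leaf (Q : {set T}) : Prop :=
  internal_block Q /\
  ((forall Q', block_nbrs Q Q' -> leaf_block Q') \/ exists v, is_anchor Q v).

Definition bigant (Q : {set T}) (u v : T) : {set T} := Q :|: Nb u :|: Nb v.

Definition deg1_nbrs (u : T) : {set T} := [set y | e u y && (#|Nb y| == 1)].

Definition is_complete : Prop := forall u v : T, u != v -> e u v.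
Definition is_star : Prop :=
  exists c : T, forall u v : T, u != v -> e u v = (u == c) || (v == c).

Definition R_choice (Rs : {set T}) : Prop :=
  ((is_complete \/ is_star) /\ Rs = [set: T])
  \/ (~ (is_complete \/ is_star) /\
      exists Q, [/\ leaf_block Q, 3 <= #|Q| & Rs = Q])
  \/ (~ (is_complete \/ is_star) /\
      ~ (exists Q, leaf_block Q /\ 3 <= #|Q|) /\
      exists Q v,
        [/\ near_leaf Q,
            is_anchor Q v \/ ((~ exists a, is_anchor Q a) /\ v \in cut_in Q) &
            (#|cut_in Q| = 2 /\
               exists u, [/\ u \in cut_in Q, u != v & Rs = bigant Q u u])
            \/ (#|cut_in Q| <> 2 /\
               exists u w, [/\ u \in cut_in Q :\ v, w \in cut_in Q :\ v, u != w &
                 Rs = if #|cut_in Q| == 3 then bigant Q u w :\ v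
                      else deg1_nbrs u :|: deg1_nbrs w :|: [set u; w]])]).

Definition disjI (I J : R * R) : Prop := Rlt I.2 J.1 \/ Rlt J.2 I.1.

(* H[V] is covered by k co-interval (spanning) subgraphs: the i-th one
   assigns interval I i x to each vertex x, its edges are the pairs with
   disjoint intervals; these must be edges of H[V], and every edge of H[V]
   must be an edge of one of them. *)
Definition cobox_le (V : {set T}) (k : nat) : Prop :=
  exists I : 'I_k -> T -> R * R,
    [/\ forall i x, Rle (I i x).1 (I i x).2,
        forall i u v, u \in V -> v \in V -> u != v ->
                      disjI (I i u) (I i v) -> e u v &
        forall u v, u \in V -> v \in V -> e u v ->
                      exists i, disjI (I i u) (I i v)].

Definition cobox_pred (V : {set T}) : pred nat :=
  fun k => if excluded_middle_informative (cobox_le V k) then true else false.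

Lemma cobox_pred_ex (V : {set T}) :
  (exists k, cobox_le V k) -> exists k, cobox_pred V k.
Proof.
case=> k hk; exists k; rewrite /cobox_pred.
by case: (excluded_middle_informative (cobox_le V k)).
Qed.

Definition cobox (V : {set T}) : nat :=
  match excluded_middle_informative (exists k, cobox_le V k) with
  | left h => ex_minn (cobox_pred_ex h)
  | right _ => 0
  end.

End GraphDefs.

(* Take [k + 1 = cobox H] interval representations whose disjointness graphs
   cover [E(H)]; it suffices to cover [H \ R] with [k] of them.  The key fact is
   that a co-interval graph has no induced 2K2: a coordinate realising a pendant
   edge [c l] realises only edges meeting [N(c)], and a coordinate realising an
   edge [x y] realises no edge outside [N[x] :|: N[y]].  In cases (1), (2) and
   (3a), [R] contains [N[x] :|: N[y]] for some edge [x y], so the coordinate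
   realising it can be dropped.  In case (3b), on [H \ R] the coordinates
   realising the pendant edges at [u], [w] (or at a third cut-vertex of [Q])
   only realise edges inside the clique [Q \ R] or through one vertex of it per
   coordinate; two such coordinates are merged into a single explicit interval
   representation. *)

From Stdlib Require Import Reals Lra Classical ClassicalEpsilon.
From mathcomp Require Import all_boot.

Set Implicit Arguments.
Unset Strict Implicit.
Unset Printing Implicit Defensive.

Lemma disjI_sym p q : disjI p q -> disjI q p.
Proof. by case=> h; [right|left]. Qed.

Lemma not_disjI p q : ~ disjI p q -> Rle q.1 p.2 /\ Rle p.1 q.2.
Proof. by move=> h; split; apply: Rnot_lt_le => h'; apply: h; [left|right]. Qed.

Lemma disjI_no_2K2 a b c d :
  Rle a.1 a.2 -> Rle b.1 b.2 -> Rle c.1 c.2 -> Rle d.1 d.2 ->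
  disjI a b -> disjI c d -> ~ disjI a c -> ~ disjI a d -> ~ disjI b c -> ~ disjI b d ->
  False.
Proof.
move=> ? ? ? ? hab hcd /not_disjI ? /not_disjI ? /not_disjI ? /not_disjI ?.
by case: hab; case: hcd => /= ? ?; lra.
Qed.

Definition flipI (p : R * R) : R * R := (Ropp p.2, Ropp p.1).

Lemma disjI_flip p q : disjI (flipI p) (flipI q) <-> disjI p q.
Proof. by rewrite /disjI /=; split; case=> h; [right|left|right|left]; lra. Qed.

Section CointervalCovers.
Variables (T : finType) (e : rel T).
Hypotheses (esym : symmetric e) (eirr : irreflexive e).

Definition interval_rep (J : T -> R * R) := forall x, Rle (J x).1 (J x).2.

Definition disj_subgraph_on (V : {set T}) (J : T -> R * R) :=
  forall a b, a \in V -> b \in V -> a != b -> disjI (J a) (J b) -> e a b.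

Definition disj_subgraph (J : T -> R * R) :=
  forall a b, a != b -> disjI (J a) (J b) -> e a b.

Lemma edge_neq a b : e a b -> a != b.
Proof. by apply: contraTneq => ->; rewrite eirr. Qed.

Lemma cobox_min V k : cobox_le e V k -> cobox e V <= k.
Proof.
move=> h; rewrite /cobox; case: excluded_middle_informative => [ex|[]]; last by exists k.
case: ex_minnP => m _; apply.
by rewrite /cobox_pred; case: excluded_middle_informative.
Qed.

Lemma cobox_le_cobox V : (exists k, cobox_le e V k) -> cobox_le e V (cobox e V).
Proof.
rewrite /cobox; case: excluded_middle_informative => // ex _.
case: ex_minnP => m + _; rewrite /cobox_pred.
by case: excluded_middle_informative.
Qed.

(* Needed because [cobox] is [0] when no cover exists.  One coordinate per ordered
   pair [(p1, p2)]: an edge [p1 p2] becomes the points [0] and [1], all other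
   vertices get [[0, 1]]. *)
Lemma cobox_le_exists V : exists k, cobox_le e V k.
Proof.
pose I (i : 'I_#|{: T * T}|) (x : T) : R * R :=
  let p := enum_val i in
  if e p.1 p.2 then (if x == p.1 then (R0, R0) else if x == p.2 then (R1, R1) else (R0, R1))
  else (R0, R1).
exists #|{: T * T}|, I; split.
- move=> i x; rewrite /I; case: ifP => _; [case: ifP => _; [|case: ifP => _]|]; simpl; lra.
- move=> i u v _ _ nuv; rewrite /I; case: (enum_val i) => p1 p2 /=.
  case: ifP => hp //; last by rewrite /disjI /=; lra.
  move: nuv.
  case: (eqVneq u p1) => [?|nu1]; case: (eqVneq v p1) => [?|nv1];
  case: (eqVneq u p2) => [?|nu2]; case: (eqVneq v p2) => [?|nv2]; subst => //= _ h;
  first [ by rewrite esym | by [] | (exfalso; case: h => /= ?; lra) ].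
- move=> u v _ _ huv; exists (enum_rank (u, v)); rewrite /I enum_rankK /= huv eqxx.
  rewrite eq_sym (negbTE (edge_neq huv)) eqxx /disjI /=; lra.
Qed.

Lemma cobox_le_set0 k : cobox_le e set0 k.
Proof. by exists (fun _ _ => (R0, R0)); split=> [_ _ /=|? u v|u v]; rewrite ?inE //; lra. Qed.

Section OneCover.
Variables (V : {set T}) (k : nat) (I : 'I_k.+1 -> T -> R * R).
Hypothesis rep : forall j, interval_rep (I j).
Hypothesis sub : forall j, disj_subgraph_on V (I j).
Hypothesis cov : forall u v, u \in V -> v \in V -> e u v -> exists j, disjI (I j u) (I j v).

Lemma cobox_le_drop i :
  (forall a b, a \in V -> b \in V -> e a b -> ~ disjI (I i a) (I i b)) -> cobox_le e V k.
Proof.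
move=> hi; exists (fun n => I (lift i n)); split=> [n|n|u v uV vV huv]; [exact: rep|exact: sub|].
case: (cov uV vV huv) => j hj; case: (unliftP i j) => [n jn|ji]; first by exists n; rewrite -jn.
by case: (hi u v uV vV huv); rewrite -ji.
Qed.

Lemma cobox_le_merge i m (F : T -> R * R) :
  i != m -> interval_rep F -> disj_subgraph_on V F ->
  (forall a b, a \in V -> b \in V -> e a b ->
     disjI (I i a) (I i b) \/ disjI (I m a) (I m b) -> disjI (F a) (F b)) ->
  cobox_le e V k.
Proof.
move=> nim repF subF covF.
exists (fun n => if lift i n == m then F else I (lift i n)); split.
- by move=> n; case: ifP => _; [apply: repF|apply: rep].
- by move=> n; case: ifP => _; [apply: subF|apply: sub].
- move=> u v uV vV huv; case: (cov uV vV huv) => j hj.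
  have [n mn] : exists n, lift i n = m.
    by case: (unliftP i m) => [n ->|mi]; [exists n|rewrite mi eqxx in nim].
  case: (unliftP i j) => [n' jn|ji].
    exists n'; case: ifP => [/eqP nm|_]; last by rewrite -jn.
    by apply: covF => //; right; rewrite -nm -jn.
  by exists n; rewrite mn eqxx; apply: covF => //; left; rewrite -ji.
Qed.

End OneCover.

Definition pendant (c l : T) := forall x, e l x -> x = c.

Definition flip_rep (J : T -> R * R) x := flipI (J x).

Lemma interval_rep_flip J : interval_rep J -> interval_rep (flip_rep J).
Proof. by move=> h x; rewrite /flip_rep /flipI /=; have := h x; lra. Qed.

Lemma disj_subgraph_flip J : disj_subgraph J -> disj_subgraph (flip_rep J).
Proof. by move=> h a b nab /disjI_flip; apply: h. Qed.

Lemma disj_subgraph_meet J a b : disj_subgraph J -> a != b -> ~~ e a b -> ~ disjI (J a) (J b).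
Proof. by move=> hs nab nab' /(hs _ _ nab); apply/negP. Qed.

Lemma disjI_orient J c l : disjI (J c) (J l) ->
  Rlt (J c).2 (J l).1 \/ Rlt (flip_rep J c).2 (flip_rep J l).1.
Proof. by rewrite /flip_rep /flipI /=; case=> h; [left|right]; lra. Qed.

Lemma pendant_meet J c l x : disj_subgraph J -> pendant c l -> x != l -> x != c ->
  ~ disjI (J l) (J x).
Proof.
move=> hs hl nxl nxc; apply: disj_subgraph_meet => //; first by rewrite eq_sym.
by apply: contra nxc => /hl ->.
Qed.

(* Otherwise [c l] and [a b] would induce a 2K2, which no co-interval graph has. *)
Lemma pendant_coord_edge J c l a b : interval_rep J -> disj_subgraph J ->
  pendant c l -> disjI (J c) (J l) ->
  a != b -> a != c -> b != c -> disjI (J a) (J b) -> e c a || e c b.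
Proof.
move=> hv hs hl hcl nab nac nbc hab.
case: (boolP (e c a)) => //= nca; apply: contraT => ncb.
have nal : a != l.
  apply: contraNneq nbc => al; rewrite al in hab; apply/eqP; apply: hl.
  by apply: hs hab; rewrite -al.
have nbl : b != l.
  apply: contraNneq nac => bl; rewrite bl in hab; apply/eqP; apply: hl.
  by rewrite esym; apply: hs hab; rewrite -bl.
exfalso; apply: (disjI_no_2K2 (hv c) (hv l) (hv a) (hv b)) => //.
- by apply: disj_subgraph_meet => //; rewrite eq_sym.
- by apply: disj_subgraph_meet => //; rewrite eq_sym.
- exact: (pendant_meet hs hl nal nac).
- exact: (pendant_meet hs hl nbl nbc).
Qed.

Lemma pendant_coord_cross_oriented J c l a1 b1 a2 b2 : interval_rep J -> disj_subgraph J ->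
  pendant c l -> Rlt (J c).2 (J l).1 ->
  a1 != c -> b1 != c -> a2 != c -> b2 != c -> a1 != b1 -> a2 != b2 ->
  disjI (J a1) (J b1) -> disjI (J a2) (J b2) -> ~~ e c a1 -> ~~ e c a2 ->
  a1 != b2 -> a2 != b1 -> ~~ e a1 b2 -> ~~ e a2 b1 -> False.
Proof.
move=> hv hs hl hcl na1 nb1 na2 nb2 n1 n2 h1 h2 nc1 nc2 m1 m2 m1' m2'.
have nl a b : a != c -> b != c -> a != b -> disjI (J a) (J b) -> a != l /\ b != l.
  move=> nac nbc nab hab; split.
    by apply: contraNneq nbc => al; apply/eqP; apply: hl; rewrite -al; exact: hs hab.
  by apply: contraNneq nac => bl; apply/eqP; apply: hl; rewrite -bl esym; exact: hs hab.
case: (nl _ _ na1 nb1 n1 h1) (nl _ _ na2 nb2 n2 h2) => l1 l1' [l2 l2'].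
have := not_disjI (pendant_meet hs hl l1 na1); have := not_disjI (pendant_meet hs hl l1' nb1).
have := not_disjI (pendant_meet hs hl l2 na2); have := not_disjI (pendant_meet hs hl l2' nb2).
rewrite eq_sym in na1; rewrite eq_sym in na2.
have := not_disjI (disj_subgraph_meet hs na1 nc1).
have := not_disjI (disj_subgraph_meet hs na2 nc2).
have := not_disjI (disj_subgraph_meet hs m1 m1').
have := not_disjI (disj_subgraph_meet hs m2 m2').
have := hv a1; have := hv a2; have := hv b1; have := hv b2; have := hv c; have := hv l.
by case: h1 => h1; case: h2 => h2 /=; lra.
Qed.

Lemma pendant_coord_cross J c l a1 b1 a2 b2 : interval_rep J -> disj_subgraph J ->
  pendant c l -> disjI (J c) (J l) ->
  a1 != c -> b1 != c -> a2 != c -> b2 != c -> a1 != b1 -> a2 != b2 ->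
  disjI (J a1) (J b1) -> disjI (J a2) (J b2) -> ~~ e c a1 -> ~~ e c a2 ->
  a1 != b2 -> a2 != b1 -> ~~ e a1 b2 -> ~~ e a2 b1 -> False.
Proof.
move=> hv hs hl /disjI_orient [] hcl na1 nb1 na2 nb2 n1 n2 h1 h2.
  exact: (pendant_coord_cross_oriented hv hs hl hcl).
apply: (pendant_coord_cross_oriented (interval_rep_flip hv) (disj_subgraph_flip hs) hl hcl);
  by [] || exact/disjI_flip.
Qed.

Lemma disj_subgraph_lt J x y : interval_rep J -> disj_subgraph J ->
  Rlt (J x).2 (J y).1 -> e x y.
Proof.
move=> hv hs hxy; apply: hs; last by left.
by apply/eqP => exy; move: hxy; rewrite exy; have := hv y; lra.
Qed.

Lemma two_pendants_coord_edge_oriented J c1 l1 c2 l2 a b : interval_rep J -> disj_subgraph J ->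
  pendant c1 l1 -> pendant c2 l2 -> c1 != c2 ->
  Rlt (J c1).2 (J l1).1 -> disjI (J c2) (J l2) -> l2 != c1 -> c2 != l1 ->
  a != c1 -> a != l1 -> a != c2 -> a != l2 ->
  b != c1 -> b != l1 -> b != c2 -> b != l2 -> a != b ->
  disjI (J a) (J b) -> (e c1 b && e c2 a) || (e c1 a && e c2 b).
Proof.
move=> hv hs hl1 hl2 n12 h1 h2 nl2c1 nc2l1 a1 a2 a3 a4 b1 b2 b3 b4 nab hab.
have nl2c1' : ~~ e l2 c1 by apply: contra n12 => /hl2 ->.
have mc1 := not_disjI (disj_subgraph_meet hs nl2c1 nl2c1').
have n21 : c2 != c1 by rewrite eq_sym.
have c2l1 := not_disjI (pendant_meet hs hl1 nc2l1 n21).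
have la := not_disjI (pendant_meet hs hl1 a2 a1); have lb := not_disjI (pendant_meet hs hl1 b2 b1).
have ka := not_disjI (pendant_meet hs hl2 a4 a3); have kb := not_disjI (pendant_meet hs hl2 b4 b3).
have := hv c1; have := hv c2; have := hv l1; have := hv l2; have := hv a; have := hv b.
move=> va vb vl2 vl1 vc2 vc1.
case: mc1 c2l1 la lb ka kb => /= ? ? [? ?] [? ?] [? ?] [? ?] [? ?].
have o2 : Rlt (J l2).2 (J c2).1 by case: h2 => h2 //; exfalso; lra.
by case: hab => hab; apply/orP; [left|right];
  rewrite -[e c2 _]esym !(disj_subgraph_lt hv hs) //; lra.
Qed.

Lemma two_pendants_coord_meet_oriented J c1 l1 c2 l2 z y : interval_rep J -> disj_subgraph J ->
  pendant c1 l1 -> pendant c2 l2 -> c1 != c2 ->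
  Rlt (J c1).2 (J l1).1 -> disjI (J c2) (J l2) -> l2 != c1 -> c2 != l1 ->
  z != c1 -> z != l1 -> z != c2 -> z != l2 ->
  y != c1 -> y != c2 -> ~~ e y c1 -> ~~ e y c2 -> ~ disjI (J z) (J y).
Proof.
move=> hv hs hl1 hl2 n12 h1 h2 nl2c1 nc2l1 a1 a2 a3 a4 b1 b3 e1 e3.
have nl2c1' : ~~ e l2 c1 by apply: contra n12 => /hl2 ->.
have mc1 := not_disjI (disj_subgraph_meet hs nl2c1 nl2c1').
have n21 : c2 != c1 by rewrite eq_sym.
have c2l1 := not_disjI (pendant_meet hs hl1 nc2l1 n21).
have la := not_disjI (pendant_meet hs hl1 a2 a1).
have ka := not_disjI (pendant_meet hs hl2 a4 a3).
have m1 := not_disjI (disj_subgraph_meet hs b1 e1).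
have m2 := not_disjI (disj_subgraph_meet hs b3 e3).
have := hv c1; have := hv c2; have := hv l1; have := hv l2; have := hv z; have := hv y.
move=> va vb vl2 vl1 vc2 vc1.
case: mc1 c2l1 la ka m1 m2 => /= ? ? [? ?] [? ?] [? ?] [? ?] [? ?].
have o2 : Rlt (J l2).2 (J c2).1 by case: h2 => h2 //; exfalso; lra.
by case=> ?; lra.
Qed.

Lemma two_pendants_coord_edge J c1 l1 c2 l2 a b : interval_rep J -> disj_subgraph J ->
  pendant c1 l1 -> pendant c2 l2 -> c1 != c2 ->
  disjI (J c1) (J l1) -> disjI (J c2) (J l2) -> l2 != c1 -> c2 != l1 ->
  a != c1 -> a != l1 -> a != c2 -> a != l2 ->
  b != c1 -> b != l1 -> b != c2 -> b != l2 -> a != b ->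
  disjI (J a) (J b) -> (e c1 b && e c2 a) || (e c1 a && e c2 b).
Proof.
move=> hv hs hl1 hl2 n12 /disjI_orient [] h1 h2 n1 n2.
  exact: (two_pendants_coord_edge_oriented hv hs hl1 hl2 n12 h1 h2 n1 n2).
have h2' : disjI (flip_rep J c2) (flip_rep J l2) by apply/disjI_flip.
move=> ? ? ? ? ? ? ? ? ? /disjI_flip hab.
exact: (two_pendants_coord_edge_oriented (interval_rep_flip hv) (disj_subgraph_flip hs)
          hl1 hl2 n12 h1 h2' n1 n2).
Qed.

Lemma two_pendants_coord_meet J c1 l1 c2 l2 z y : interval_rep J -> disj_subgraph J ->
  pendant c1 l1 -> pendant c2 l2 -> c1 != c2 ->
  disjI (J c1) (J l1) -> disjI (J c2) (J l2) -> l2 != c1 -> c2 != l1 ->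
  z != c1 -> z != l1 -> z != c2 -> z != l2 ->
  y != c1 -> y != c2 -> ~~ e y c1 -> ~~ e y c2 -> ~ disjI (J z) (J y).
Proof.
move=> hv hs hl1 hl2 n12 /disjI_orient [] h1 h2 n1 n2.
  exact: (two_pendants_coord_meet_oriented hv hs hl1 hl2 n12 h1 h2 n1 n2).
have h2' : disjI (flip_rep J c2) (flip_rep J l2) by apply/disjI_flip.
move=> ? ? ? ? ? ? ? ? /disjI_flip.
exact: (two_pendants_coord_meet_oriented (interval_rep_flip hv) (disj_subgraph_flip hs)
          hl1 hl2 n12 h1 h2' n1 n2).
Qed.

Section CliqueRep.
Variables (V K : {set T}) (xa xb : T).
Hypothesis K_clique : forall x y, x \in K -> y \in K -> x != y -> e x y.
Hypotheses (xaK : xa \in K) (xbK : xb \in K).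
Hypothesis no_common_nbr : forall x, x \in V -> x \notin K -> e x xa -> e x xb -> xa = xb.

Local Open Scope R_scope.

Let M := INR #|T| + 2.
Let pos (x : T) := INR (enum_rank x) + 1.
Let pt (x : T) := if x == xa then 0 else if x == xb then M else pos x.

(* Vertices of [K] become distinct points of [[0, M]], with [xa] at [0] and [xb]
   at [M]; the intervals of all other vertices contain [[1, M - 1]] and miss
   exactly the points of their neighbours among [xa] and [xb]. *)
Definition clique_rep (x : T) : R * R :=
  if x \in K then (pt x, pt x)
  else if e x xa then (1, M) else if e x xb then (0, M - 1) else (0, M).

Let M_ge2 : 2 <= M.
Proof. by rewrite /M; have := pos_INR #|T|; lra. Qed.

Let pos_bounds x : 1 <= pos x <= M - 2.
Proof.
rewrite /pos /M; have := pos_INR (enum_rank x).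
have : INR (enum_rank x).+1 <= INR #|T| by exact/le_INR/leP/ltn_ord.
by rewrite S_INR; lra.
Qed.

Let pos_inj x y : pos x = pos y -> x = y.
Proof. by rewrite /pos => h; exact/enum_rank_inj/val_inj/INR_eq/(Rplus_eq_reg_r 1). Qed.

Let pt_cases x : (x = xa /\ pt x = 0) \/ (x = xb /\ pt x = M) \/ pt x = pos x.
Proof.
rewrite /pt; case: (eqVneq x xa) => [|_]; first by left.
by case: (eqVneq x xb) => [|_]; [right; left | right; right].
Qed.

Let pt_inj x y : pt x = pt y -> x = y.
Proof.
have := pos_bounds x; have := pos_bounds y.
case: (pt_cases x) (pt_cases y) => [[-> ->]|[[-> ->]|->]] [[-> ->]|[[-> ->]|->]] //; try lra.
by move=> _ _; apply: pos_inj.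
Qed.

Lemma clique_rep_interval : interval_rep clique_rep.
Proof.
move=> x; rewrite /clique_rep; case: ifP => _ /=; first lra.
by case: ifP => _; [|case: ifP => _] => /=; lra.
Qed.

Lemma clique_rep_sub : disj_subgraph clique_rep.
Proof.
have mixed a b : a \in K -> b \notin K -> disjI (clique_rep a) (clique_rep b) -> e a b.
  move=> aK /negbTE bK; rewrite /clique_rep aK bK /disjI /=.
  have := pos_bounds a.
  case: ifP => [hbxa|_]; [|case: ifP => [hbxb|_]] => /=;
    by case: (pt_cases a) => [[-> ->]|[[-> ->]|->]] ? ?; rewrite 1?esym //; lra.
move=> a b nab; case: (boolP (a \in K)) => aK; case: (boolP (b \in K)) => bK.
- by move=> _; apply: K_clique.
- exact: mixed.
- by move/disjI_sym/mixed; rewrite esym; apply.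
- rewrite /clique_rep (negbTE aK) (negbTE bK) /disjI.
  by case: ifP => _; [|case: ifP => _]; (case: ifP => _; [|case: ifP => _]) => /=; lra.
Qed.

Let clique_rep_cover_K a b : b \in V -> e a b -> a \in K ->
  b \in K \/ a = xa \/ a = xb -> disjI (clique_rep a) (clique_rep b).
Proof.
move=> bV hab aK hcase; case: (boolP (b \in K)) => bK.
  rewrite /clique_rep aK bK /disjI /=.
  case: (Rtotal_order (pt a) (pt b)) => [lt|[/pt_inj abE|gt]]; [by left| |by right].
  by move: hab; rewrite abE eirr.
have xa_case : a = xa -> e b xa -> disjI (clique_rep a) (clique_rep b).
  move=> -> hbxa; rewrite /clique_rep xaK (negbTE bK) hbxa /pt eqxx /disjI /=.
  by left; lra.
have [axa|axb] : a = xa \/ a = xb by case: hcase => // bK'; rewrite bK' in bK.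
  by apply: xa_case; rewrite // esym -axa.
have hbxb : e b xb by rewrite esym -axb.
case: (boolP (e b xa)) => hbxa.
  by apply: xa_case => //; rewrite axb; symmetry; apply: (no_common_nbr bV).
have nxbxa : (xb == xa) = false by apply: contraNF hbxa => /eqP <-.
rewrite /clique_rep aK (negbTE bK) (negbTE hbxa) hbxb /pt axb nxbxa eqxx /disjI /=.
by right; lra.
Qed.

Lemma clique_rep_cover a b : a \in V -> b \in V -> e a b ->
  (a \in K /\ b \in K) \/ a = xa \/ b = xa \/ a = xb \/ b = xb ->
  disjI (clique_rep a) (clique_rep b).
Proof.
move=> aV bV hab; have hba : e b a by rewrite esym.
case=> [[aK bK]|[ea|[eb|[ea|eb]]]]; [|subst a|subst b|subst a|subst b].
- by apply: clique_rep_cover_K => //; left.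
- by apply: clique_rep_cover_K => //; right; left.
- by apply/disjI_sym/clique_rep_cover_K => //; right; left.
- by apply: clique_rep_cover_K => //; right; right.
- by apply/disjI_sym/clique_rep_cover_K => //; right; right.
Qed.

End CliqueRep.
End CointervalCovers.

Section Blocks.
Variables (T : finType) (e : rel T).
Hypotheses (esym : symmetric e) (eirr : irreflexive e).

Local Notation ir := (ind_rel e).
Local Notation conn S := (connected_set e S).

Lemma ind_rel_sym (S : {set T}) : symmetric (ir S).
Proof.
by move=> a b; rewrite /ind_rel /= esym; case: (a \in S); case: (b \in S); rewrite ?andbF.
Qed.

Lemma connect_ind_sym (S : {set T}) : connect_sym (ir S).
Proof. exact: sym_connect_sym (ind_rel_sym S). Qed.

Lemma connect_ind_sub (S S' : {set T}) x y :
  S \subset S' -> connect (ir S) x y -> connect (ir S') x y.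
Proof.
move=> sub; apply: connect_sub => a b /= /and3P [hab ha hb]; apply: connect1.
by rewrite /ind_rel /= hab (subsetP sub _ ha) (subsetP sub _ hb).
Qed.

Lemma ncomp_le1 (S : {set T}) : conn S -> ncomp e S <= 1.
Proof.
move=> hc; rewrite /ncomp.
case: (set_0Vmem S) => [->|[x0 hx0]]; first by rewrite imset0 cards0.
rewrite -(cards1 (comp_of e S x0)); apply: subset_leq_card.
apply/subsetP => C /imsetP [x hx ->]; rewrite inE; apply/eqP/setP => z.
rewrite !inE; case: (boolP (z \in S)) => //= hz.
apply/idP/idP => h; apply: connect_trans h.
  by rewrite connect_ind_sym; apply: hc.
by apply: hc.
Qed.

Lemma ncomp_le1_connected (S : {set T}) : ncomp e S <= 1 -> conn S.
Proof.
move=> h x y hx hy; apply: contraT => nxy.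
have hne : comp_of e S x != comp_of e S y.
  apply/eqP => /setP /(_ y); rewrite !inE hy connect0 /= => h'.
  by rewrite h' in nxy.
suff : 1 < ncomp e S by rewrite ltnNge h.
have <- : #|[set comp_of e S x; comp_of e S y]| = 2 by rewrite cards2 hne.
rewrite /ncomp; apply: subset_leq_card; apply/subsetP => C.
by rewrite !inE => /orP [] /eqP ->; apply: imset_f.
Qed.

Lemma ncomp_gt0 (S : {set T}) x : x \in S -> 0 < ncomp e S.
Proof.
by move=> hx; rewrite /ncomp card_gt0; apply/set0Pn; exists (comp_of e S x); exact: imset_f.
Qed.

Lemma cut_vertex_disconnects x : conn [set: T] -> is_cut_vertex e x -> ~ conn [set~ x].
Proof.
move=> hT; rewrite /is_cut_vertex => hlt hc.
have := ncomp_le1 hc; have := ncomp_gt0 (in_setT x).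
by move: hlt; case: (ncomp e [set: T]) => // n; case: (ncomp e [set~ x]) => // [[|m]].
Qed.

Lemma noncut_connected x : conn [set: T] -> ~~ is_cut_vertex e x -> conn [set~ x].
Proof.
move=> hT; rewrite /is_cut_vertex -leqNgt => h; apply: ncomp_le1_connected.
by apply: leq_trans h (ncomp_le1 hT).
Qed.

Lemma biconnP (S : {set T}) : biconn_set e S <->
  [/\ S != set0, conn S & forall x, x \in S -> conn (S :\ x)].
Proof.
split.
  case=> hne hc hno; split => // x hx; apply: ncomp_le1_connected.
  by apply: leq_trans (hno x hx) (ncomp_le1 hc).
case=> hne hc hx; split => // x xS; apply: leq_trans (ncomp_le1 (hx x xS)) _.
by apply: ncomp_gt0 xS.
Qed.

Lemma clique_biconn (S : {set T}) :
  S != set0 -> (forall x y, x \in S -> y \in S -> x != y -> e x y) ->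
  biconn_set e S.
Proof.
move=> hne hcl; apply/biconnP; split => //.
  move=> x y hx hy; case: (eqVneq x y) => [->|nxy]; first exact: connect0.
  by apply: connect1; rewrite /ind_rel /= hx hy !andbT; apply: hcl.
move=> z _ x y hx hy; case: (eqVneq x y) => [->|nxy]; first exact: connect0.
apply: connect1; rewrite /ind_rel /= hx hy !andbT.
by move: hx hy; rewrite !inE => /andP [_ hx] /andP [_ hy]; apply: hcl.
Qed.

Lemma connected_setU (A B : {set T}) c : conn A -> conn B -> c \in A -> c \in B -> conn (A :|: B).
Proof.
move=> hA hB cA cB.
have toc : forall x, x \in A :|: B -> connect (ir (A :|: B)) x c.
  move=> x; rewrite inE => /orP [] hx.
    by apply: (@connect_ind_sub A); [apply: subsetUl|apply: hA].
  by apply: (@connect_ind_sub B); [apply: subsetUr|apply: hB].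
move=> x y hx hy; apply: connect_trans (toc x hx) _; rewrite connect_ind_sym; exact: toc.
Qed.

Lemma biconn_setU (S1 S2 : {set T}) a b : biconn_set e S1 -> biconn_set e S2 -> a != b ->
  a \in S1 -> a \in S2 -> b \in S1 -> b \in S2 -> biconn_set e (S1 :|: S2).
Proof.
move=> /biconnP [ne1 c1 h1] /biconnP [ne2 c2 h2] nab a1 a2 b1 b2.
apply/biconnP; split.
- by apply/set0Pn; exists a; rewrite inE a1.
- exact: connected_setU c1 c2 a1 a2.
- move=> z _; rewrite setDUl.
  have del (S : {set T}) : (forall x, x \in S -> conn (S :\ x)) -> conn S -> conn (S :\ z).
    move=> hS cS; case: (boolP (z \in S)) => hz; first exact: hS.
    by rewrite (setDidPl _) // disjoint_sym disjoints1.
  have k1 := del _ h1 c1; have k2 := del _ h2 c2.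
  case: (eqVneq z a) => [za|nza].
    have nzb : b != z by rewrite za eq_sym.
    by apply: (connected_setU (c:=b) k1 k2); rewrite !inE ?nzb ?b1 ?b2.
  have nza' : a != z by rewrite eq_sym.
  by apply: (connected_setU (c:=a) k1 k2); rewrite !inE ?nza' ?a1 ?a2.
Qed.

Lemma biconn_sub_block (S : {set T}) : biconn_set e S -> exists B, is_block e B /\ S \subset B.
Proof.
move: {2}#|~: S| (leqnn #|~: S|) => n; elim: n S => [|n IH] S hn hS.
  exists S; split => //; split => // B' /properP [_ [x _ xS]].
  by move: hn; rewrite leqn0 cards_eq0 => /eqP /setP /(_ x); rewrite !inE xS.
case: (classic (is_block e S)) => hb; first by exists S.
have [B' [pB' bB']] : exists B' : {set T}, S \proper B' /\ biconn_set e B'.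
  apply: NNPP => hn'; apply: hb; split => // B' hp hb'; apply: hn'; by exists B'.
have : #|~: B'| <= n.
  rewrite -ltnS; apply: leq_trans hn; apply: proper_card; by rewrite properC.
case/(IH B')/(_ bB') => B [hB sB]; exists B; split => //.
by apply: subset_trans sB; apply: proper_sub.
Qed.

Lemma block_absorb (B S : {set T}) a b : is_block e B -> biconn_set e S -> a != b ->
  a \in S -> b \in S -> a \in B -> b \in B -> S \subset B.
Proof.
move=> [bB hmax] bS nab aS bS' aB bB'.
have hU := biconn_setU bB bS nab aB aS bB' bS'.
apply: contraT => nsub; exfalso; apply: (hmax (B :|: S)) => //.
rewrite properEneq subsetUl andbT; apply: contraNneq nsub => hE.
by rewrite hE subsetUr.
Qed.

Lemma block_common_nbr (Q : {set T}) x a b : block_graph e -> is_block e Q -> a != b ->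
  a \in Q -> b \in Q -> e x a -> e x b -> x \in Q.
Proof.
move=> bg bQ nab aQ bQ' xa xb.
have hcl : forall y z, y \in [set x; a; b] -> z \in [set x; a; b] -> y != z -> e y z.
  have eab : e a b by apply: (bg Q bQ).
  move=> y z; rewrite !inE => hy hz.
  case/orP: hy => [/orP [] |] /eqP ->; case/orP: hz => [/orP [] |] /eqP ->;
  rewrite ?eqxx // => _; by rewrite // esym.
have ne : [set x; a; b] != set0 by apply/set0Pn; exists x; rewrite !inE eqxx.
have bT := clique_biconn ne hcl.
have := block_absorb bQ bT nab _ _ aQ bQ'.
have i1 : a \in [set x; a; b] by rewrite !inE eqxx !orbT.
have i2 : b \in [set x; a; b] by rewrite !inE eqxx !orbT.
by move=> /(_ i1 i2) /subsetP; apply; rewrite !inE eqxx.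
Qed.

Lemma ind_path_all (A : {set T}) h s : path (ir A) h s -> h \in A -> all (mem A) s.
Proof.
elim: s h => //= y s IH h /andP [/and3P [_ _ hy] hp] _.
by rewrite hy (IH y hp hy).
Qed.

Lemma ind_path_edge (A : {set T}) h s : path (ir A) h s -> path e h s.
Proof. by apply: sub_path => a b /and3P []. Qed.

Lemma path_connect_ind (A : {set T}) s h : path e h s -> {subset h :: s <= A} ->
  forall c, c \in h :: s -> connect (ir A) h c.
Proof.
elim: s h => [|y s IH] h /=.
  by move=> _ _ c; rewrite inE => /eqP ->; apply: connect0.
move=> /andP [hy hp] sub c; rewrite inE => /orP [/eqP ->|hc]; first exact: connect0.
apply: connect_trans (IH y hp _ c hc).
  apply: connect1; rewrite /ind_rel /= hy !sub //; by rewrite !inE eqxx ?orbT.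
by move=> z hz; apply: sub; rewrite inE hz orbT.
Qed.

Lemma cycle_biconn (c : seq T) : c != [::] -> uniq c -> cycle e c -> biconn_set e [set x in c].
Proof.
move=> cne cu cc.
have key : forall h s, path e h s -> conn [set x in h :: s].
  move=> h s hp x y hx hy.
  have sub : {subset h :: s <= [set x in h :: s]} by move=> z hz; rewrite inE.
  rewrite inE in hx; rewrite inE in hy.
  apply: (@connect_trans _ _ h); last exact: path_connect_ind hp sub _ hy.
  by rewrite connect_ind_sym; exact: path_connect_ind hp sub _ hx.
apply/biconnP; split.
- by case: c cne {cu cc} => // h s _; apply/set0Pn; exists h; rewrite inE mem_head.
- case: c cne cu cc => // h s _ _ /=; rewrite rcons_path => /andP [hp _].
  exact: key.
- move=> z; rewrite inE => zc; case/rot_to: zc => i s' hrot.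
  have cu' : uniq (z :: s') by rewrite -hrot rot_uniq.
  have cc' : cycle e (z :: s') by rewrite -hrot rot_cycle.
  have -> : [set x in c] :\ z = [set x in s'].
    apply/setP => w; rewrite !inE -(mem_rot i) hrot inE.
    case: (eqVneq w z) => [->|//]; move: cu' => /= /andP [hz _].
    by rewrite (negbTE hz).
  case: s' {hrot} cu' cc' => [|h t] _.
    by move=> _ x y; rewrite inE.
  rewrite /= rcons_path => /andP [_ /andP [hp _]]; exact: key.
Qed.

Lemma path_last_nbr u p a : path e a p -> last a p = u -> a != u ->
  exists n, e n u /\ connect (ir [set~ u]) a n.
Proof.
elim: p a => [|y p IH] a /=; first by move=> _ -> ; rewrite eqxx.
move=> /andP [hay hp] hl nau.
case: (eqVneq y u) => [yu|nyu].
  by exists a; split; [rewrite -yu|apply: connect0].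
case: (IH y hp hl nyu) => n [hn hc]; exists n; split => //.
apply: connect_trans hc; apply: connect1.
by rewrite /ind_rel /= hay !inE nau nyu.
Qed.

Lemma cut_vertex_outer_nbr (Q : {set T}) u : conn [set: T] ->
  (forall x y, x \in Q -> y \in Q -> x != y -> e x y) ->
  u \in Q -> is_cut_vertex e u -> exists y, e u y /\ y \notin Q.
Proof.
move=> hT hQ uQ hcut; apply: NNPP => hno; apply: (cut_vertex_disconnects hT hcut).
have nbQ : forall y, e u y -> y \in Q.
  move=> y hy; apply: NNPP => hyQ; apply: hno; exists y; split => //; exact/negP.
have toN : forall a, a \in [set~ u] -> exists n, [/\ n \in Q, n != u & connect (ir [set~ u]) a n].
  move=> a; rewrite !inE => nau.
  case/connectP: (hT a u (in_setT a) (in_setT u)) => p hp hl.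
  case: (path_last_nbr (ind_path_edge hp) (sym_eq hl) nau) => n [hn hc].
  exists n; split => //; first by apply: nbQ; rewrite esym.
  by apply: contraTneq hn => ->; rewrite eirr.
move=> a b ha hb.
case: (toN a ha) => na [naQ nau hca]; case: (toN b hb) => nb [nbQ' nbu hcb].
apply: connect_trans hca _; rewrite connect_ind_sym in hcb; apply: connect_trans _ hcb.
case: (eqVneq na nb) => [->|nn]; first exact: connect0.
by apply: connect1; rewrite /ind_rel /= !inE nau nbu hQ.
Qed.

(* A path from [y] to [b] avoiding [x] closes a cycle through [x], which [B] absorbs. *)
Lemma noncut_nbr_in_block (B : {set T}) x y b : conn [set: T] -> block_graph e -> is_block e B ->
  x \in B -> b \in B -> b != x -> ~~ is_cut_vertex e x -> e x y -> y \in B.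
Proof.
move=> hT bg bB xB bB' nbx ncut hxy.
have hc := noncut_connected hT ncut.
have nyx : y != x by apply: contraTneq hxy => ->; rewrite eirr.
have yS : y \in [set~ x] by rewrite !inE.
have bS : b \in [set~ x] by rewrite !inE.
case/connectP: (hc y b yS bS) => p hp hl.
case: (shortenP hp) hl => p' hp' hu _ hl.
set c := x :: y :: p'.
have hall := ind_path_all hp' yS.
have xnot : x \notin y :: p'.
  rewrite inE negb_or eq_sym nyx /=; apply/negP => xp.
  by move/allP: hall => /(_ x xp); rewrite !inE eqxx.
have ebx : e b x by rewrite esym; apply: (bg B bB) => //; rewrite eq_sym.
have cyc : cycle e c.
  rewrite /c /= hxy /= rcons_path (ind_path_edge hp') /=.
  by rewrite -hl ebx.
have hu2 : uniq c by rewrite /c cons_uniq xnot hu.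
have hb := cycle_biconn (isT : c != [::]) hu2 cyc.
have := block_absorb bB hb nbx _ _ bB' xB.
have bin : b \in [set z in c] by rewrite inE /c hl in_cons mem_last orbT.
have xin : x \in [set z in c] by rewrite inE /c mem_head.
move=> /(_ bin xin) /subsetP; apply; by rewrite inE /c !inE eqxx orbT.
Qed.
End Blocks.

Section BlockStructure.
Variables (T : finType) (e : rel T).
Hypotheses (esym : symmetric e) (eirr : irreflexive e).
Hypothesis connT : connected_set e [set: T].
Hypothesis bg : block_graph e.

Definition chosen_anchor (Q : {set T}) v :=
  is_anchor e Q v \/ ((~ exists a, is_anchor e Q a) /\ v \in cut_in e Q).

Definition no_big_leaf := ~ exists Q, leaf_block e Q /\ 3 <= #|Q|.

Lemma deg1_nbrsP u s : reflect (e u s /\ pendant e u s) (s \in deg1_nbrs e u).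
Proof.
rewrite inE; apply: (iffP andP) => [[hus /eqP Ns1]|[hus hs]]; split => //.
  move=> x hx; have /card_le1_eqP : #|Nb e s| <= 1 by rewrite Ns1.
  by apply; rewrite inE // esym.
suff -> : Nb e s = [set u] by rewrite cards1.
by apply/setP => x; rewrite !inE; apply/idP/eqP => [/hs //|->]; rewrite esym.
Qed.

Lemma cut_in_sub Q : cut_in e Q \subset Q.
Proof. by apply/subsetP => x; rewrite inE => /andP []. Qed.

Lemma chosen_anchor_mem Q v : chosen_anchor Q v -> v \in Q.
Proof. by case=> [[vc _ _]|[_ vc]]; apply: (subsetP (cut_in_sub Q)). Qed.

Lemma pendant_notin_clique (Q : {set T}) c r :
  (forall x y, x \in Q -> y \in Q -> x != y -> e x y) ->
  3 <= #|Q| -> pendant e c r -> r \notin Q.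
Proof.
move=> Qcl Q3 hr; apply/negP => rQ.
have : Q \subset [set r; c].
  apply/subsetP => q qQ; rewrite !inE; case: (eqVneq q r) => //= nqr.
  by apply/eqP/hr/Qcl; rewrite // eq_sym.
move/subset_leq_card/(leq_trans Q3)/leq_trans/(_ (leq_card_setU [set r] [set c])).
by rewrite !cards1.
Qed.

Lemma edge_in_block x y : e x y -> exists2 B, is_block e B & [set x; y] \subset B.
Proof.
move=> hxy; have nxy := edge_neq eirr hxy.
have /biconn_sub_block [B [bB sB]] : biconn_set e [set x; y].
  apply: (clique_biconn esym); first by apply/set0Pn; exists x; rewrite !inE eqxx.
  move=> a b; rewrite !inE => /orP [] /eqP -> /orP [] /eqP ->; rewrite ?eqxx //.
  by rewrite esym.
by exists B.
Qed.

(* Only the anchor of a near-leaf block is shared with internal blocks. *)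
Lemma near_leaf_nbr_leaf Q v B u : near_leaf e Q -> chosen_anchor Q v ->
  is_block e B -> Q != B -> u \in Q -> u \in cut_in e B -> u != v -> leaf_block e B.
Proof.
move=> [[bQ _] nlQ] hv bB nQB uQ ucB nuv.
have uB : u \in B by apply: (subsetP (cut_in_sub B)).
have nbr : block_nbrs e Q B.
  by split => //; rewrite -setI_eq0; apply/set0Pn; exists u; rewrite inE uQ.
case: nlQ => [all_leaf|[a ha]]; first exact: all_leaf.
split => //; apply/eqP; rewrite eqn_leq card_gt0 andbC; apply/andP; split.
  by apply/set0Pn; exists u.
rewrite leqNgt; apply/negP => c2.
case: hv => [[_ _ anchor]|[no_anchor _]]; last by case: no_anchor; exists a.
have /setP /(_ u) := anchor B nbr (conj bB c2).
by rewrite !inE uQ uB => uv; rewrite -uv in nuv.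
Qed.

Lemma small_leaf_pendant B u y : no_big_leaf -> leaf_block e B ->
  u \in cut_in e B -> y \in B -> y != u -> pendant e u y.
Proof.
move=> nbig [bB c1] ucB yB nyu.
have uB : u \in B by apply: (subsetP (cut_in_sub B)).
have BE : B = [set u; y].
  apply/eqP; rewrite eq_sym eqEcard cards2 eq_sym nyu.
  rewrite (leqNgt #|B|) andbC; apply/andP; split.
    by apply/negP => hB; apply: nbig; exists B.
  by apply/subsetP => x; rewrite !inE => /orP [] /eqP ->.
have ync : ~~ is_cut_vertex e y.
  apply/negP => yc; have : 1 < #|cut_in e B|.
    by apply/card_gt1P; exists u, y; rewrite [y \in _]inE yB yc eq_sym.
  by rewrite c1.
have nuy : u != y by rewrite eq_sym.
move=> x hyx; have := noncut_nbr_in_block esym eirr connT bg bB yB uB nuy ync hyx.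
by rewrite BE !inE => /orP [] /eqP // xy; rewrite xy eirr in hyx.
Qed.

Lemma near_leaf_cut_pendants Q v u : near_leaf e Q -> chosen_anchor Q v -> no_big_leaf ->
  u \in cut_in e Q -> u != v ->
  (forall y, e u y -> y \notin Q -> pendant e u y) /\
  exists2 s, s \in deg1_nbrs e u & s \notin Q.
Proof.
move=> nlQ hv nbig ucQ nuv.
have [[bQ _] _] := nlQ.
have uQ : u \in Q by apply: (subsetP (cut_in_sub Q)).
have ucut : is_cut_vertex e u by move: ucQ; rewrite inE => /andP [].
have pend y : e u y -> y \notin Q -> pendant e u y.
  move=> huy yQ; have [B bB /subsetP sB] := edge_in_block huy.
  have uB : u \in B by apply: sB; rewrite !inE eqxx.
  have yB : y \in B by apply: sB; rewrite !inE eqxx orbT.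
  have ucB : u \in cut_in e B by rewrite inE uB ucut.
  have nQB : Q != B by apply: contraNneq yQ => ->.
  have lB := near_leaf_nbr_leaf nlQ hv bB nQB uQ ucB nuv.
  by apply: (small_leaf_pendant nbig lB ucB yB); rewrite eq_sym (edge_neq eirr huy).
split => //; have [y [huy yQ]] := cut_vertex_outer_nbr esym eirr connT (bg bQ) uQ ucut.
by exists y => //; apply/deg1_nbrsP; split => //; apply: pend.
Qed.

Lemma big_leaf_block_inner_edge Q : leaf_block e Q -> 3 <= #|Q| ->
  exists x y, [/\ e x y, {subset Nb e x <= Q} & {subset Nb e y <= Q}].
Proof.
move=> [bQ c1] hQ.
have : 1 < #|Q :\: cut_in e Q|.
  by rewrite cardsD (setIidPr (cut_in_sub Q)) c1; move: hQ; case: #|Q| => [|[|[|n]]].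
case/card_gt1P => x [y [/setDP [xQ xc] /setDP [yQ yc] nxy]].
have xnc : ~~ is_cut_vertex e x by move: xc; rewrite inE xQ.
have ync : ~~ is_cut_vertex e y by move: yc; rewrite inE yQ.
exists x, y; split; first exact: (bg bQ).
  by move=> z; rewrite inE; apply: (noncut_nbr_in_block esym eirr connT bg bQ xQ yQ _ xnc);
    rewrite eq_sym.
by move=> z; rewrite inE; apply: (noncut_nbr_in_block esym eirr connT bg bQ yQ xQ nxy ync).
Qed.

End BlockStructure.

Section CoboxDecrease.
Local Unset Implicit Arguments.
Variables (T : finType) (e : rel T).
Hypotheses (esym : symmetric e) (eirr : irreflexive e).
Hypothesis connT : connected_set e [set: T].
Hypothesis bg : block_graph e.
Variables (k : nat) (I : 'I_k.+1 -> T -> R * R).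
Hypothesis rep : forall j, interval_rep (I j).
Hypothesis sub : forall j, disj_subgraph e (I j).
Hypothesis cov : forall u v, e u v -> exists j, disjI (I j u) (I j v).

Let sub_on (V : {set T}) j : disj_subgraph_on e V (I j).
Proof. by move=> a b _ _; apply: sub. Qed.

Let cov_on (V : {set T}) u v : u \in V -> v \in V -> e u v -> exists j, disjI (I j u) (I j v).
Proof. by move=> _ _; apply: cov. Qed.

Lemma cobox_le_avoid_edge (V : {set T}) x y : e x y ->
  (forall a, a \in V -> [/\ a != x, a != y, ~~ e x a & ~~ e y a]) -> cobox_le e V k.
Proof.
move=> hxy hV; have [j hj] := cov x y hxy.
apply: (@cobox_le_drop _ _ V k I rep (sub_on V) (cov_on V) j).
move=> a b aV bV hab hd.
have [ax ay xa ya] := hV a aV; have [bx b_y xb yb] := hV b bV.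
apply: (disjI_no_2K2 (rep j x) (rep j y) (rep j a) (rep j b) hj hd);
  by apply: (disj_subgraph_meet (sub j)); rewrite // eq_sym.
Qed.

(* The two coordinates are replaced by [clique_rep] for the clique [Q :&: V]. *)
Lemma cobox_le_merge_block (V Q : {set T}) i m ya yb : is_block e Q -> i != m ->
  ya \in Q :&: V -> yb \in Q :&: V ->
  (forall a b, a \in V -> b \in V -> e a b ->
     disjI (I i a) (I i b) \/ disjI (I m a) (I m b) ->
     (a \in Q :&: V /\ b \in Q :&: V) \/ a = ya \/ b = ya \/ a = yb \/ b = yb) ->
  cobox_le e V k.
Proof.
move=> bQ nim yaK ybK realised.
have Kcl x y : x \in Q :&: V -> y \in Q :&: V -> x != y -> e x y.
  by rewrite !inE => /andP [xQ _] /andP [yQ _]; apply: (bg Q bQ).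
have no_common x : x \in V -> x \notin Q :&: V -> e x ya -> e x yb -> ya = yb.
  move=> xV xK hxa hxb; apply: NNPP => /eqP nab; move: xK; rewrite inE xV andbT.
  by move: yaK ybK; rewrite !inE => /andP [yaQ _] /andP [ybQ _];
    rewrite (block_common_nbr esym bg bQ nab yaQ ybQ hxa hxb).
apply: (cobox_le_merge rep (sub_on V) (cov_on V) nim (clique_rep_interval e _ ya yb)).
  by move=> a b _ _; apply: (clique_rep_sub esym Kcl).
move=> a b aV bV hab hd.
exact: (clique_rep_cover esym eirr yaK ybK no_common aV bV hab (realised a b aV bV hab hd)).
Qed.

(* A vertex outside a block has at most one neighbour in it, so two such edges
   with distinct ends in [Q] would have no cross edge. *)
Lemma pendant_coord_crossing Q m c l a1 b1 a2 b2 : is_block e Q -> c \in Q ->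
  pendant e c l -> disjI (I m c) (I m l) -> b1 != c -> b2 != c ->
  a1 \notin Q -> b1 \in Q -> e a1 b1 -> disjI (I m a1) (I m b1) ->
  a2 \notin Q -> b2 \in Q -> e a2 b2 -> disjI (I m a2) (I m b2) -> b1 = b2.
Proof.
move=> bQ cQ hl hcl nb1 nb2 a1Q b1Q h1 d1 a2Q b2Q h2 d2; apply: NNPP => /eqP nb.
have out_c a b : a \notin Q -> b \in Q -> b != c -> e a b -> (a != c) && ~~ e c a.
  move=> aQ bQ' nbc hab; have -> /= : a != c by apply: contraNneq aQ => ->.
  apply/negP => hca; have hac : e a c by rewrite esym.
  have ncb : c != b by rewrite eq_sym.
  by rewrite (block_common_nbr esym bg bQ ncb cQ bQ' hac hab) in aQ.
have /andP [na1 nc1] := out_c _ _ a1Q b1Q nb1 h1.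
have /andP [na2 nc2] := out_c _ _ a2Q b2Q nb2 h2.
have cross a b b' : a \notin Q -> b \in Q -> b' \in Q -> b != b' -> e a b ->
    (a != b') && ~~ e a b'.
  move=> aQ bQ' bQ'' nbb' hab; have -> /= : a != b' by apply: contraNneq aQ => ->.
  apply/negP => hab'.
  by rewrite (block_common_nbr esym bg bQ nbb' bQ' bQ'' hab hab') in aQ.
have /andP [n12 m12] := cross _ _ _ a1Q b1Q b2Q nb h1.
have nb' : b2 != b1 by rewrite eq_sym.
have /andP [n21 m21] := cross _ _ _ a2Q b2Q b1Q nb' h2.
exact: (pendant_coord_cross esym (rep m) (sub m) hl hcl na1 nb1 na2 nb2
          (edge_neq eirr h1) (edge_neq eirr h2) d1 d2 nc1 nc2 n12 n21 m12 m21).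
Qed.

Lemma pendant_coord_star (V Q : {set T}) m c l y0 : is_block e Q -> c \in Q ->
  y0 \in Q :&: V -> pendant e c l -> disjI (I m c) (I m l) ->
  (forall r, r \in V -> r != c -> e c r -> r \in Q \/ pendant e c r) ->
  exists2 y, y \in Q :&: V & forall a b, a \in V -> b \in V -> a != c -> b != c ->
    e a b -> disjI (I m a) (I m b) -> (a \in Q :&: V /\ b \in Q :&: V) \/ a = y \/ b = y.
Proof.
move=> bQ cQ y0K hl hcl nbr_c.
have meets_Q a b : a \in V -> b \in V -> a != c -> b != c -> e a b ->
    disjI (I m a) (I m b) -> a \in Q \/ b \in Q.
  move=> aV bV nac nbc hab hd.
  have := pendant_coord_edge esym (rep m) (sub m) hl hcl (edge_neq eirr hab) nac nbc hd.
  case/orP=> hc.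
    case: (nbr_c a aV nac hc) => [|ha]; first by left.
    by move: nbc; rewrite (ha b hab) eqxx.
  case: (nbr_c b bV nbc hc) => [|hb]; first by right.
  by move: nac; rewrite (hb a) ?eqxx // esym.
pose crossing a b := [/\ a \notin Q, b \in Q, b != c, e a b & disjI (I m a) (I m b)].
have crossing_uniq a1 b1 a2 b2 : crossing a1 b1 -> crossing a2 b2 -> b1 = b2.
  by case=> ? ? ? ? ? [? ? ? ? ?]; apply: (pendant_coord_crossing Q m c l a1 b1 a2 b2).
have edge_cases a b : a \in V -> b \in V -> a != c -> b != c -> e a b ->
    disjI (I m a) (I m b) -> (a \in Q /\ b \in Q) \/ crossing a b \/ crossing b a.
  move=> aV bV nac nbc hab hd.
  case: (boolP (a \in Q)) => aQ; case: (boolP (b \in Q)) => bQ'.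
  - by left.
  - by right; right; split => //; [rewrite esym | apply: disjI_sym].
  - by right; left.
  - by case: (meets_Q a b aV bV nac nbc hab hd) => h; [rewrite h in aQ|rewrite h in bQ'].
have inK a b : a \in Q -> b \in Q -> a \in V -> b \in V -> a \in Q :&: V /\ b \in Q :&: V.
  by move=> aQ bQ' aV bV; rewrite !inE aQ bQ' aV bV.
have [[a0 [b0 [h0 b0V]]]|none] := classic (exists a0 b0, crossing a0 b0 /\ b0 \in V).
  exists b0; first by case: h0 => _ b0Q _ _ _; rewrite inE b0Q b0V.
  move=> a b aV bV nac nbc hab hd.
  case: (edge_cases a b aV bV nac nbc hab hd) => [[aQ bQ']|[h|h]].
  - by left; apply: inK.
  - by right; right; apply: crossing_uniq h h0.
  - by right; left; apply: crossing_uniq h h0.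
exists y0 => // a b aV bV nac nbc hab hd.
case: (edge_cases a b aV bV nac nbc hab hd) => [[aQ bQ']|[h|h]].
- by left; apply: inK.
- by case: none; exists a, b.
- by case: none; exists b, a.
Qed.


Lemma cobox_le_big_leaf Q : leaf_block e Q -> 3 <= #|Q| -> cobox_le e (~: Q) k.
Proof.
move=> lQ Q3; have [x [y [hxy Nx Ny]]] := big_leaf_block_inner_edge esym eirr connT bg lQ Q3.
apply: (cobox_le_avoid_edge _ x y hxy) => a; rewrite inE => aQ.
have xQ : x \in Q by apply: Ny; rewrite inE esym.
have yQ : y \in Q by apply: Nx; rewrite inE.
split; try by apply: contraNneq aQ => ->.
- by apply: contra aQ => hxa; apply: Nx; rewrite inE.
- by apply: contra aQ => hya; apply: Ny; rewrite inE.
Qed.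

Lemma cobox_le_bigant1 Q v u : near_leaf e Q -> chosen_anchor e Q v -> no_big_leaf e ->
  u \in cut_in e Q -> u != v -> cobox_le e (~: bigant e Q u u) k.
Proof.
move=> nlQ hv nbig ucQ nuv.
have [_ [s /(deg1_nbrsP esym) [hus hls] _]] :=
  near_leaf_cut_pendants esym eirr connT bg nlQ hv nbig ucQ nuv.
have uQ : u \in Q := subsetP (cut_in_sub e Q) u ucQ.
apply: (cobox_le_avoid_edge _ u s hus) => a.
rewrite !inE !negb_or => /andP [/andP [aQ nua] _]; split => //.
- by apply: contraNneq aQ => ->.
- by apply: contraNneq nua => ->.
- by apply/negP => /hls au; rewrite au uQ in aQ.
Qed.

Lemma cobox_le_bigant2 Q v u w : near_leaf e Q -> chosen_anchor e Q v -> no_big_leaf e ->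
  u \in cut_in e Q :\ v -> w \in cut_in e Q :\ v -> u != w ->
  cobox_le e (~: (bigant e Q u w :\ v)) k.
Proof.
move=> nlQ hv nbig /setD1P [nuv ucQ] /setD1P [nwv wcQ] nuw.
have [[bQ _] _] := nlQ.
have [_ [s /(deg1_nbrsP esym) [hus hls] sQ]] :=
  near_leaf_cut_pendants esym eirr connT bg nlQ hv nbig ucQ nuv.
have [_ [t /(deg1_nbrsP esym) [hwt hlt] tQ]] :=
  near_leaf_cut_pendants esym eirr connT bg nlQ hv nbig wcQ nwv.
have uQ : u \in Q := subsetP (cut_in_sub e Q) u ucQ.
have wQ : w \in Q := subsetP (cut_in_sub e Q) w wcQ.
set V := ~: (bigant e Q u w :\ v).
have only_v a : a \in V -> e u a || e w a -> a = v.
  rewrite !inE negb_and negbK => /orP [/eqP //|].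
  by rewrite !negb_or => /andP [/andP [_ /negbTE ->] /negbTE ->].
have snv : s != v by apply: contraNneq sQ => ->; apply: chosen_anchor_mem hv.
have tnv : t != v by apply: contraNneq tQ => ->; apply: chosen_anchor_mem hv.
have off a : a \in V -> [/\ a != u, a != s, a != w & a != t].
  move=> aV; split; apply: contraTneq aV => ->; rewrite !inE negbK.
  - by rewrite nuv uQ.
  - by rewrite hus snv !orbT.
  - by rewrite nwv wQ.
  - by rewrite hwt tnv !orbT.
have tu : t != u by apply: contraNneq tQ => ->.
have ws : w != s by apply: contraTneq wQ => ->.
have [i hi] := cov u s hus; have [j hj] := cov w t hwt.
case: (eqVneq i j) => [ij|nij].
  rewrite -ij in hj; apply: (@cobox_le_drop _ _ V k I rep (sub_on V) (cov_on V) i).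
  move=> a b aV bV hab hd.
  have [a1 a2 a3 a4] := off a aV; have [b1 b2 b3 b4] := off b bV.
  have := two_pendants_coord_edge esym (rep i) (sub i) hls hlt nuw hi hj tu ws
            a1 a2 a3 a4 b1 b2 b3 b4 (edge_neq eirr hab) hd.
  case/orP=> /andP [hub hwa].
    by move: hab; rewrite (only_v a aV) ?hwa ?orbT // (only_v b bV) ?hub // eirr.
  by move: hab; rewrite (only_v a aV) ?hub // (only_v b bV) ?hwa ?orbT // eirr.
have vK : v \in Q :&: V by rewrite !inE eqxx (chosen_anchor_mem hv).
apply: (cobox_le_merge_block V Q i j v v bQ nij vK vK) => a b aV bV hab hd.
have [a1 _ a3 _] := off a aV; have [b1 _ b3 _] := off b bV.
have nab := edge_neq eirr hab; right.
case: hd => hd.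
  case/orP: (pendant_coord_edge esym (rep i) (sub i) hls hi nab a1 b1 hd) => h.
    by left; apply: only_v; rewrite ?h.
  by right; left; apply: only_v; rewrite ?h.
case/orP: (pendant_coord_edge esym (rep j) (sub j) hlt hj nab a3 b3 hd) => h.
  by left; apply: only_v; rewrite ?h ?orbT.
by right; left; apply: only_v; rewrite ?h ?orbT.
Qed.


Section PendantSets.
Local Set Implicit Arguments.
Variables (Q : {set T}) (v u w : T).
Hypotheses (nlQ : near_leaf e Q) (hv : chosen_anchor e Q v) (nbig : no_big_leaf e).
Hypotheses (ucQ : u \in cut_in e Q) (wcQ : w \in cut_in e Q).
Hypotheses (nuv : u != v) (nwv : w != v) (nuw : u != w).
Hypothesis cut4 : 3 < #|cut_in e Q|.

Let V := ~: (deg1_nbrs e u :|: deg1_nbrs e w :|: [set u; w]).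

Let bQ : is_block e Q. Proof. by case: nlQ => [[]]. Qed.
Let uQ : u \in Q. Proof. exact: (subsetP (cut_in_sub e Q)). Qed.
Let wQ : w \in Q. Proof. exact: (subsetP (cut_in_sub e Q)). Qed.

Let cut_pendants c : c \in cut_in e Q -> c != v ->
  (forall y, e c y -> y \notin Q -> pendant e c y) /\
  exists2 s, s \in deg1_nbrs e c & s \notin Q.
Proof. exact: (near_leaf_cut_pendants esym eirr connT bg nlQ hv nbig). Qed.

Let pendant_notin_Q c r : pendant e c r -> r \notin Q.
Proof.
apply: (pendant_notin_clique (bg Q bQ)).
exact: leq_trans (ltnW cut4) (subset_leq_card (cut_in_sub e Q)).
Qed.

Let inV a : a \in V = [&& a \notin deg1_nbrs e u, a \notin deg1_nbrs e w, a != u & a != w].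
Proof. by rewrite !inE !negb_or -!andbA. Qed.

Let in_QV a : a \in Q -> a != u -> a != w -> a \in Q :&: V.
Proof.
move=> aQ nau naw; rewrite in_setI aQ inV nau naw !andbT /=.
by apply/andP; split; apply: contraTN aQ => /(deg1_nbrsP esym) [_ /pendant_notin_Q].
Qed.

Let vQV : v \in Q :&: V.
Proof. by apply: in_QV; rewrite 1?eq_sym // (chosen_anchor_mem hv). Qed.

Let nbr_in_Q c a : c \in [set u; w] -> a \in V -> e c a -> a \in Q.
Proof.
rewrite in_set2 inV => /orP [] /eqP -> /and4P [au aw _ _] hca; apply: contraT => aQ.
  suff : a \in deg1_nbrs e u by rewrite (negbTE au).
  by apply/(deg1_nbrsP esym); split; last exact: (cut_pendants ucQ nuv).1 a hca aQ.
suff : a \in deg1_nbrs e w by rewrite (negbTE aw).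
by apply/(deg1_nbrsP esym); split; last exact: (cut_pendants wcQ nwv).1 a hca aQ.
Qed.

Let off a s t : a \in V -> s \in deg1_nbrs e u -> t \in deg1_nbrs e w ->
  [/\ a != u, a != s, a != w & a != t].
Proof.
rewrite inV => /and4P [au aw nau naw] sd td; split => //.
  by apply: contraNneq au => ->.
by apply: contraNneq aw => ->.
Qed.

(* If one coordinate realises pendant edges at both [u] and [w], its edges on [V]
   stay inside [Q]; a third cut-vertex [z] of [Q] with pendant edge [z sz] is
   realised by another coordinate, and the two are merged. *)
Let shared_coord i s t : s \in deg1_nbrs e u -> t \in deg1_nbrs e w ->
  disjI (I i u) (I i s) -> disjI (I i w) (I i t) -> cobox_le e V k.
Proof.
move=> sd td hi hj.
have [hus hls] := deg1_nbrsP esym _ _ sd; have [hwt hlt] := deg1_nbrsP esym _ _ td.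
have tu : t != u by apply: contraTneq uQ => <-; apply: pendant_notin_Q hlt.
have ws : w != s by apply: contraTneq wQ => ->; apply: pendant_notin_Q hls.
have [z zc] : exists2 z, z \in cut_in e Q & z \notin [set v; u; w].
  apply/subsetPn; apply: contraTN cut4 => /subset_leq_card le_cut; rewrite -leqNgt.
  apply: leq_trans le_cut (leq_trans (leq_card_setU _ _) _).
  by rewrite cardsU1 !cards1; case: (_ \notin _).
rewrite !inE !negb_or => /andP [/andP [nzv nzu] nzw].
have zQ : z \in Q by apply: (subsetP (cut_in_sub e Q)).
have [z_pend [sz szd _]] := cut_pendants zc nzv.
have [hzsz hlsz] := deg1_nbrsP esym _ _ szd.
have [m hm] := cov z sz hzsz.
have nim : i != m.
  apply/eqP => im; rewrite -im in hm.
  have zs : z != s by apply: contraTneq zQ => ->; apply: pendant_notin_Q hls.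
  have zt : z != t by apply: contraTneq zQ => ->; apply: pendant_notin_Q hlt.
  have szu : sz != u by apply: contraTneq uQ => <-; apply: pendant_notin_Q hlsz.
  have szw : sz != w by apply: contraTneq wQ => <-; apply: pendant_notin_Q hlsz.
  have eszu : ~~ e sz u by apply/negP => /hlsz zu; rewrite zu eqxx in nzu.
  have eszw : ~~ e sz w by apply/negP => /hlsz zw; rewrite zw eqxx in nzw.
  exact: (two_pendants_coord_meet (rep i) (sub i) hls hlt nuw hi hj
            tu ws nzu zs nzw zt szu szw eszu eszw hm).
have nbr_z r : r \in V -> r != z -> e z r -> r \in Q \/ pendant e z r.
  by move=> _ _ hzr; case: (boolP (r \in Q)) => rQ; [left|right; apply: z_pend].
have [ym ymK hym] := pendant_coord_star V Q m z sz v bQ zQ vQV hlsz hm nbr_z.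
apply: (cobox_le_merge_block V Q i m z ym bQ nim (in_QV zQ nzu nzw) ymK).
move=> a b aV bV hab [] hd.
  have [a1 a2 a3 a4] := off aV sd td; have [b1 b2 b3 b4] := off bV sd td.
  left; have := two_pendants_coord_edge esym (rep i) (sub i) hls hlt nuw hi hj tu ws
                  a1 a2 a3 a4 b1 b2 b3 b4 (edge_neq eirr hab) hd.
  have inK x y : x \in V -> e u x -> y \in V -> e w y -> x \in Q :&: V /\ y \in Q :&: V.
    move=> xV hux yV hwy; rewrite !in_setI xV yV !andbT.
    by split; [apply: (nbr_in_Q _ xV hux)|apply: (nbr_in_Q _ yV hwy)]; rewrite !inE eqxx ?orbT.
  case/orP=> /andP [hub hwa]; first by have [] := inK b a bV hub aV hwa.
  exact: inK.
case: (eqVneq a z) => [->|naz]; first by right; left.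
case: (eqVneq b z) => [->|nbz]; first by right; right; left.
by case: (hym a b aV bV naz nbz hab hd) => [|[]]; auto.
Qed.

Let separate_coords i j s t : i != j -> s \in deg1_nbrs e u -> t \in deg1_nbrs e w ->
  disjI (I i u) (I i s) -> disjI (I j w) (I j t) -> cobox_le e V k.
Proof.
move=> nij sd td hi hj.
have [_ hls] := deg1_nbrsP esym _ _ sd; have [_ hlt] := deg1_nbrsP esym _ _ td.
have nbr c : c \in [set u; w] ->
    forall r, r \in V -> r != c -> e c r -> r \in Q \/ pendant e c r.
  by move=> cuw r rV _ hcr; left; apply: nbr_in_Q hcr.
have [yi yiK hyi] :=
  pendant_coord_star V Q i u s v bQ uQ vQV hls hi (nbr u (setU11 _ _)).
have [yj yjK hyj] :=
  pendant_coord_star V Q j w t v bQ wQ vQV hlt hj (nbr w (setU1r _ (set11 _))).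
apply: (cobox_le_merge_block V Q i j yi yj bQ nij yiK yjK) => a b aV bV hab.
have [a1 _ a3 _] := off aV sd td; have [b1 _ b3 _] := off bV sd td.
case=> hd; [case: (hyi a b aV bV a1 b1 hab hd) | case: (hyj a b aV bV a3 b3 hab hd)];
  by intuition.
Qed.

Lemma cobox_le_pendant_sets : cobox_le e V k.
Proof.
have [_ [s sd _]] := cut_pendants ucQ nuv; have [_ [t td _]] := cut_pendants wcQ nwv.
have [i hi] := cov u s (deg1_nbrsP esym _ _ sd).1.
have [j hj] := cov w t (deg1_nbrsP esym _ _ td).1.
case: (eqVneq i j) => [ij|nij].
  by rewrite -ij in hj; apply: (shared_coord sd td hi hj).
exact: (separate_coords nij sd td hi hj).
Qed.

End PendantSets.

Lemma cobox_le_R_choice Rs : R_choice e Rs -> cobox_le e (~: Rs) k.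
Proof.
case=> [[_ ->]|[[_ [Q [lQ Q3 ->]]]|[_ [nbig [Q [v [nlQ hv hcase]]]]]]].
- by rewrite setCT; apply: cobox_le_set0.
- exact: cobox_le_big_leaf.
case: hcase => [[_ [u [ucQ nuv ->]]]|[n2 [u [w [uc wc nuw ->]]]]].
  exact: (cobox_le_bigant1 Q v u nlQ hv nbig ucQ nuv).
case: ifP => [_|/eqP n3]; first exact: (cobox_le_bigant2 Q v u w nlQ hv nbig uc wc nuw).
have [/setD1P [nuv ucQ] /setD1P [nwv wcQ]] := conj uc wc.
apply: (cobox_le_pendant_sets nlQ hv nbig ucQ wcQ nuv nwv nuw).
by case: nlQ => [[_ c2] _]; move: c2 n2 n3; case: #|cut_in e Q| => [|[|[|[|n]]]].
Qed.

End CoboxDecrease.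

Theorem lemma12 (T : finType) (e : rel T) (Rs : {set T}) :
  symmetric e -> irreflexive e ->
  connected_set e [set: T] ->
  (exists x y : T, e x y) ->
  block_graph e ->
  R_choice e Rs ->
  cobox e (~: Rs) <= cobox e [set: T] - 1.
Proof.
move=> esym eirr connT [x [y hxy]] bg hR.
have := cobox_le_cobox (cobox_le_exists esym eirr [set: T]).
case: (cobox e [set: T]) => [|k] [I [rep sub cov]].
  by have [[]] := cov x y (in_setT x) (in_setT y) hxy.
rewrite subn1 /=; apply: cobox_min.
apply: (cobox_le_R_choice _ _ esym eirr connT bg _ _ rep _ _ _ hR).
  by move=> j a b; apply: sub; rewrite inE.
by move=> u v; apply: cov; rewrite inE.
Qed.
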